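(* Let $(G,V^\infty,T,k)$ be an instance of \textsc{OddMultiwayNodeCut} with $G$ a DAG. Let $M^*$ be a minimum-size solution chosen as follows: among all minimum-size solutions $S$, it maximizes $|r_G(S)\cup f_G(S)\cup S|$, and among those it maximizes $|r_G(S)|$. Then: - $M^*$ is thin; - for every node $v\in r_G(M^* )$, some important $v\rightarrow T$ separator is contained in $M^*$.
   Context: Paths are simple directed paths; a path is odd if it has an odd number of edges. An instance $(G,V^\infty,T,k)$ consists of a DAG $G$, protected nodes $V^\infty\subseteq V(G)$, terminals $T\subseteq V^\infty$ and $k\in\mathbb{Z}_+$. A $T$-path has both ends in $T$. A solution is a set $M\subseteq V(G)\setminus V^\infty$ intersecting every odd $T$-path. $\mathcal{R}_H(X)$ is the set of nodes reachable from $X$ in $H$, including $X$. The shadows are $f_G(M):=V(G\setminus M)\setminus\mathcal{R}_{G\setminus M}(T)$, and $r_G(M):=$ the set of $v\in V(G)\setminus M$ with no path to $T$ in $G\setminus M$. A set $M$ is thin if no $v\in M$ lies in $r_G(M\setminus\{v\})$. An $X\rightarrow Y$ separator is a set $S\subseteq V(G)\setminus V^\infty$ such that $G\setminus S$ has no $X$-to-$Y$ path. Separator $S'$ dominates separator $S$ if $|S'|\le|S|$ and $\mathcal{R}_{G\setminus S}(X)\subsetneq\mathcal{R}_{G\setminus S'}(X)$. An important separator is an inclusion-minimal separator dominated by no other separator. *)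

From mathcomp Require Import all_boot.
Set Implicit Arguments. Unset Strict Implicit. Unset Printing Implicit Defensive.

Section Defs.
Variables (V : finType) (e : rel V).

Definition is_dag : Prop :=
  forall (x : V) (p : seq V), path e x p -> last x p = x -> p = [::].

(* a simple directed path x :: p ; its number of edges is size p *)
Definition dpath (x : V) (p : seq V) : bool := path e x p && uniq (x :: p).

Definition del_rel (S : {set V}) : rel V :=
  [rel a b | [&& e a b, a \notin S & b \notin S]].

Definition reachR (S X : {set V}) : {set V} :=
  [set v | (v \notin S) &&
           [exists x in X, (x \notin S) && connect (del_rel S) x v]].

Definition solution (Vinf T M : {set V}) : Prop :=
  M \subset ~: Vinf /\
  forall (x : V) (p : seq V), dpath x p -> x \in T -> last x p \in T ->
    odd (size p) -> has (fun v => v \in M) (x :: p).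

Definition fshadow (T M : {set V}) : {set V} := (~: M) :\: reachR M T.

Definition rshadow (T M : {set V}) : {set V} :=
  [set v | (v \notin M) && ~~ [exists t in T, connect (del_rel M) v t]].

Definition thin (T M : {set V}) : Prop :=
  forall v, v \in M -> v \notin rshadow T (M :\ v).

Definition separator (Vinf X Y S : {set V}) : Prop :=
  S \subset ~: Vinf /\
  ~ (exists x y, [/\ x \in X, y \in Y, x \notin S, y \notin S &
                     connect (del_rel S) x y]).

Definition dominates (X S' S : {set V}) : Prop :=
  #|S'| <= #|S| /\ reachR S X \proper reachR S' X.

Definition important_separator (Vinf X Y S : {set V}) : Prop :=
  [/\ separator Vinf X Y S,
      (forall S', separator Vinf X Y S' -> S' \subset S -> S' = S) &
      ~ (exists S', separator Vinf X Y S' /\ dominates X S' S)].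

End Defs.

From mathcomp Require Import all_boot zify.

(* Thinness holds for every minimum solution M: if v in M lay in r(M \ v), any
   odd T-path through v could be continued from v to T inside G \ (M \ v), so
   M \ v would still be a solution.
   For v in r(M), the nodes S0 of M entered from the reach R of v in G \ M form
   a v -> T separator.  Pushing it towards T gives an important separator S with
   |S| <= |S0| and R contained in the reach of v in G \ S.  Exchanging S0 for S
   yields a solution M' that is no larger, hence minimum and thin; the shadows
   of M' together with M' contain those of M, and r(M') contains r(M) and
   S0 \ S.  The two tie-breaking maximality conditions then force S = S0, which
   lies in M. *)

Set Implicit Arguments. Unset Strict Implicit. Unset Printing Implicit Defensive.

Section Reachability.
Variables (V : finType) (e : rel V).
Implicit Types (A B S X : {set V}) (x y : V).

Lemma connect_del_relS A B x y :
  A \subset B -> connect (del_rel e B) x y -> connect (del_rel e A) x y.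
Proof.
move=> sAB; apply: connect_sub => a b /and3P[eab aB bB]; apply: connect1.
by rewrite /del_rel /= eab (contra (subsetP sAB a) aB)
  (contra (subsetP sAB b) bB).
Qed.

Lemma connect_del_rel_notin S x y :
  x \notin S -> connect (del_rel e S) x y -> y \notin S.
Proof.
move=> xS /connectP[p + ->]; elim: p x xS => //= z p IHp x _.
by case/andP=> /and3P[_ _ zS]; apply: IHp.
Qed.

Lemma path_del_rel A x p :
  path e x p -> all [pred u | u \notin A] (x :: p) -> path (del_rel e A) x p.
Proof.
elim: p x => //= y p IHp x /andP[exy pe] /and3P[xA yA pA].
by rewrite /del_rel /= exy xA yA IHp //= yA.
Qed.

Lemma path_del_relD1 A z x p :
  z \notin x :: p -> path (del_rel e (A :\ z)) x p -> path (del_rel e A) x p.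
Proof.
move=> zp; apply: (@sub_in_path _ (predC1 z)); last first.
  by rewrite all_predC has_pred1.
move=> a b; rewrite !inE => az bz /and3P[eab aA bA]; rewrite /del_rel /= eab.
by move: aA bA; rewrite !in_setD1 az bz => -> ->.
Qed.

Lemma in_reachR S X y :
  (y \in reachR e S X) =
  (y \notin S) && [exists x in X, (x \notin S) && connect (del_rel e S) x y].
Proof. by rewrite inE. Qed.

Lemma reachR_notin S X y : y \in reachR e S X -> y \notin S.
Proof. by rewrite in_reachR => /andP[]. Qed.

Lemma reachR_connect S X x y :
  x \in reachR e S X -> connect (del_rel e S) x y -> y \in reachR e S X.
Proof.
rewrite !in_reachR => /andP[xS /exists_inP[z zX /andP[zS czx]]] cxy.
rewrite (connect_del_rel_notin xS cxy); apply/exists_inP; exists z => //.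
by rewrite zS (connect_trans czx cxy).
Qed.

Lemma reachRS S1 S2 X : S1 \subset S2 -> reachR e S2 X \subset reachR e S1 X.
Proof.
move=> sS12; apply/subsetP => y; rewrite !in_reachR.
case/andP=> yS /exists_inP[x xX /andP[xS cxy]].
rewrite (contra (subsetP sS12 y) yS); apply/exists_inP; exists x => //.
by rewrite (contra (subsetP sS12 x) xS) (connect_del_relS sS12 cxy).
Qed.

End Reachability.

Lemma leq_lex_weight N a1 a2 b1 b2 : b1 < N -> b2 < N -> a2 <= a1 ->
  a1 * N + b1 <= a2 * N + b2 -> a1 = a2 /\ b1 <= b2.
Proof. nia. Qed.

Section Separators.
Variables (V : finType) (e : rel V) (Vinf : {set V}).
Implicit Types (S X Y : {set V}).

Lemma separatorP X Y S :
  reflect (separator e Vinf X Y S)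
          ((S \subset ~: Vinf) && [disjoint reachR e S X & Y]).
Proof.
apply: (iffP andP) => -[SV sepS]; split=> //.
  move=> [x [y [xX yY xS yS cxy]]].
  have yR : y \in reachR e S X.
    by rewrite in_reachR yS; apply/exists_inP; exists x; rewrite ?xS.
  by rewrite (disjointFr sepS yR) in yY.
rewrite disjoints_subset; apply/subsetP => y.
rewrite in_reachR inE => /andP[yS /exists_inP[x xX /andP[xS cxy]]].
by apply/negP => yY; apply: sepS; exists x, y.
Qed.

Definition boundary S X : {set V} :=
  [set u in S | [exists w in reachR e S X, e w u]].

Lemma boundary_sub S X : boundary S X \subset S.
Proof. by apply/subsetP => u; rewrite inE => /andP[]. Qed.

Lemma reachR_boundary S X :
  [disjoint X & S] -> reachR e (boundary S X) X = reachR e S X.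
Proof.
move=> XS; apply/eqP; rewrite eqEsubset (reachRS _ _ (boundary_sub S X)) andbT.
have stay u w : u \in reachR e S X -> del_rel e (boundary S X) u w ->
    w \in reachR e S X.
  move=> uR /and3P[euw _ wS0]; apply: (reachR_connect uR); apply: connect1.
  have uS := reachR_notin uR; have wS : w \notin S.
    by apply: contra wS0 => wS; rewrite inE wS; apply/exists_inP; exists u.
  by rewrite /del_rel /= euw uS wS.
apply/subsetP => y; rewrite in_reachR => /andP[_ /exists_inP[x xX /andP[_ cxy]]].
have xR : x \in reachR e S X.
  by rewrite in_reachR (disjointFr XS xX); apply/exists_inP; exists x;
    rewrite // (disjointFr XS xX) connect0.
case/connectP: cxy => p + ->; elim: p x {xX} xR => //= w p IHp x xR.
by case/andP=> xw; apply: IHp (stay _ _ xR xw).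
Qed.

Lemma separator_boundary X Y S :
  [disjoint X & S] -> separator e Vinf X Y S ->
  separator e Vinf X Y (boundary S X).
Proof.
move=> XS /separatorP/andP[SV sepS]; apply/separatorP.
by rewrite reachR_boundary // sepS (subset_trans (boundary_sub S X)).
Qed.

Lemma exists_important_separator X Y S0 :
  separator e Vinf X Y S0 ->
  exists2 S, important_separator e Vinf X Y S &
             (#|S| <= #|S0|) && (reachR e S0 X \subset reachR e S X).
Proof.
move=> /separatorP sepS0.
pose cand S := [&& (S \subset ~: Vinf) && [disjoint reachR e S X & Y],
                   #|S| <= #|S0| & reachR e S0 X \subset reachR e S X].
(* orders candidates lexicographically: larger reach first, then smaller size *)
pose wt S := #|reachR e S X| * #|V|.+1 + #|~: S|.
have candS0 : cand S0 by rewrite /cand sepS0 leqnn subxx.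
have wt_lex S1 S2 : #|reachR e S2 X| <= #|reachR e S1 X| -> wt S1 <= wt S2 ->
    #|reachR e S1 X| = #|reachR e S2 X| /\ #|S2| <= #|S1|.
  move=> le21 le_wt.
  have [||eqR leC] := leq_lex_weight _ _ le21 le_wt; rewrite ?ltnS ?max_card //.
  by split=> //; have := cardsC S1; have := cardsC S2; lia.
case: (arg_maxnP wt candS0) => S /and3P[/separatorP sepS cardS reachS] maxS.
exists S; last by rewrite cardS reachS.
split=> // [S' sepS' sS'S | [S' [sepS' [cardS' ltS]]]].
  have leR := reachRS e X sS'S.
  have candS' : cand S'.
    rewrite /cand (introT (separatorP _ _ _) sepS') (subset_trans reachS leR).
    by rewrite (leq_trans (subset_leq_card sS'S) cardS).
  have [_ leS] := wt_lex S' S (subset_leq_card leR) (maxS S' candS').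
  by apply/eqP; rewrite eqEcard sS'S leS.
have candS' : cand S'.
  rewrite /cand (introT (separatorP _ _ _) sepS') (leq_trans cardS' cardS).
  exact: subset_trans reachS (proper_sub ltS).
have [eqR _] := wt_lex S' S (ltnW (proper_card ltS)) (maxS S' candS').
by move: (proper_card ltS); rewrite eqR ltnn.
Qed.

End Separators.

Lemma connect_last (V : finType) (r : rel V) x p u :
  path r x p -> u \in x :: p -> connect r u (last x p).
Proof.
move=> rp up; case/splitPl: up rp => p1 p2 <-.
rewrite cat_path last_cat => /andP[_ p2r].
by apply/connectP; exists p2.
Qed.

Section Shadows.
Variables (V : finType) (e : rel V) (Vinf T : {set V}).
Implicit Types (M S : {set V}) (v y : V).

Definition reachesT S y : bool := [exists t in T, connect (del_rel e S) y t].

Lemma reachesTP S y :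
  reflect (exists2 t, t \in T & connect (del_rel e S) y t) (reachesT S y).
Proof. exact: exists_inP. Qed.

Definition Tpath_nodes S : {set V} := [set y in reachR e S T | reachesT S y].

Lemma in_Tpath_nodes S y :
  (y \in Tpath_nodes S) = (y \in reachR e S T) && reachesT S y.
Proof. by rewrite /Tpath_nodes in_set. Qed.

Lemma in_rshadow S y : (y \in rshadow e T S) = (y \notin S) && ~~ reachesT S y.
Proof. by rewrite inE. Qed.

Lemma reachesT_connect S x y :
  connect (del_rel e S) x y -> reachesT S y -> reachesT S x.
Proof.
move=> cxy /reachesTP[t tT cyt].
by apply/reachesTP; exists t; rewrite // (connect_trans cxy).
Qed.

Lemma rshadow_notin S y : y \in rshadow e T S -> y \notin S.
Proof. by rewrite in_rshadow => /andP[]. Qed.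

Lemma shadows_setUC S :
  rshadow e T S :|: fshadow e T S :|: S = ~: Tpath_nodes S.
Proof.
apply/setP => y; rewrite !in_setU in_setD !in_setC in_rshadow in_Tpath_nodes !inE.
by case: (y \in S); case: (reachesT S y); case: [exists _ in T, _].
Qed.

Lemma rshadow_separator S v :
  S \subset ~: Vinf -> v \in rshadow e T S -> separator e Vinf [set v] T S.
Proof.
move=> SV; rewrite in_rshadow => /andP[_ vT]; apply/separatorP.
rewrite SV disjoints_subset; apply/subsetP => y.
rewrite in_reachR inE => /andP[_ /exists_inP[x /set1P-> /andP[_ cvy]]].
by apply: contra vT => yT; apply/reachesTP; exists y.
Qed.

Lemma solutionD1 M v :
  solution e Vinf T M -> v \in rshadow e T (M :\ v) -> solution e Vinf T (M :\ v).
Proof.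
move=> [MV Mhit] vr; split; first exact: subset_trans (subsetDl M _) MV.
move=> x p dp xT pT odd_p; have [u up uM] := hasP (Mhit x p dp xT pT odd_p).
have [uv | nuv] := eqVneq u v; last by apply/hasP; exists u; rewrite // !inE nuv.
rewrite {u uM}uv in up.
apply/negPn/negP => avoid; move: vr; rewrite in_rshadow => /andP[_ /negP]; apply.
have pA : path (del_rel e (M :\ v)) x p.
  by apply: path_del_rel; [case/andP: dp | rewrite all_predC].
by apply/reachesTP; exists (last x p); rewrite // (connect_last pA up).
Qed.

Lemma min_solution_thin M :
  solution e Vinf T M -> (forall S, solution e Vinf T S -> #|M| <= #|S|) ->
  thin e T M.
Proof.
move=> Msol Mmin v vM; apply/negP => vr.
by have := Mmin _ (solutionD1 Msol vr); rewrite (cardsD1 v M) vM ltnn.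
Qed.

End Shadows.

Section Exchange.
Variables (V : finType) (e : rel V) (Vinf T M S' : {set V}) (v : V).
Hypotheses (Msol : solution e Vinf T M) (S'sep : separator e Vinf [set v] T S')
  (S'reach : reachR e M [set v] \subset reachR e S' [set v]).

Let S0 := boundary e M [set v].
Let M' := (M :\: S0) :|: S'.

(* A node of M that reaches T avoiding M' lies in S0 \ S', so it is reachable
   from v avoiding S', contradicting that S' separates v from T. *)
Lemma exchange_notin y : y \notin M' -> reachesT e T M' y -> y \notin M.
Proof.
move=> yM' /reachesTP[t tT cyt]; apply/negP => yM.
have yS0 : y \in S0 by apply: contraR yM' => yS0; rewrite in_setU in_setD yS0 yM.
have yS' : y \notin S' by apply: contra yM' => yS'; rewrite in_setU yS' orbT.
have yR : y \in reachR e S' [set v].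
  move: yS0; rewrite inE => /andP[_ /exists_inP[w wRM ewy]].
  have wR := subsetP S'reach w wRM.
  apply: (reachR_connect wR); apply: connect1.
  by rewrite /del_rel /= ewy (reachR_notin wR) yS'.
have tR := reachR_connect yR (connect_del_relS (subsetUr _ _) cyt).
by case/separatorP/andP: S'sep => _ /disjointFr/(_ tR); rewrite tT.
Qed.

Lemma exchange_connect x y :
  x \notin M' -> connect (del_rel e M') x y -> reachesT e T M' y ->
  connect (del_rel e M) x y.
Proof.
move=> + /connectP[p + ->]; elim: p x => [|z p IHp] x /= xM'.
  by rewrite connect0.
move=> /andP[xz zp] yr; have zM' : z \notin M' by case/and3P: xz.
have zr : reachesT e T M' z.
  by apply: reachesT_connect yr; apply/connectP; exists p.
have xr := reachesT_connect (connect1 xz) zr.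
apply: connect_trans (IHp z zM' zp yr); apply: connect1.
by case/and3P: xz => exz _ _; rewrite /del_rel /= exz (exchange_notin xM' xr)
  (exchange_notin zM' zr).
Qed.

Lemma exchange_reachesT x : x \notin M' -> reachesT e T M' x -> reachesT e T M x.
Proof.
move=> xM' xr; case/reachesTP: (xr) => t tT cxt; apply/reachesTP; exists t => //.
by apply: exchange_connect xM' cxt _; apply/reachesTP; exists t.
Qed.

Lemma exchange_solution : solution e Vinf T M'.
Proof.
have [MV Mhit] := Msol; have [S'V _] := S'sep.
split; first by rewrite subUset (subset_trans (subsetDl _ _) MV) S'V.
move=> x p dp xT pT odd_p; apply/negPn/negP; rewrite -all_predC => avoid.
have [u up uM] := hasP (Mhit x p dp xT pT odd_p).
have pM' : path (del_rel e M') x p by apply: path_del_rel; case/andP: dp.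
have ur : reachesT e T M' u.
  by apply/reachesTP; exists (last x p); rewrite // (connect_last pM' up).
by move: uM; rewrite (negbTE (exchange_notin (allP avoid u up) ur)).
Qed.

Lemma exchange_Tpath_nodes : Tpath_nodes e T M' \subset Tpath_nodes e T M.
Proof.
apply/subsetP => y; rewrite !in_Tpath_nodes => /andP[yR yr].
have yM' := reachR_notin yR; rewrite exchange_reachesT // andbT.
move: yR; rewrite !in_reachR (exchange_notin yM' yr).
case/andP=> _ /exists_inP[t tT /andP[tM' cty]]; have tr := reachesT_connect cty yr.
by apply/exists_inP; exists t; rewrite // (exchange_notin tM' tr)
  (exchange_connect tM' cty yr).
Qed.

Lemma exchange_rshadow y :
  y \notin M' -> (y \in M) || ~~ reachesT e T M y -> y \in rshadow e T M'.
Proof.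
move=> yM' yMr; rewrite in_rshadow yM'; apply: contraL yMr => yr.
by rewrite negb_or negbK (exchange_notin yM' yr) (exchange_reachesT yM' yr).
Qed.

Lemma exchange_thin_disjoint : thin e T M' -> [disjoint S' & rshadow e T M].
Proof.
move=> thinM'; rewrite disjoints_subset; apply/subsetP => z zS'.
rewrite in_setC in_rshadow negb_and !negbK; have [//|zM /=] := boolP (z \in M).
have /thinM' : z \in M' by rewrite in_setU zS' orbT.
rewrite in_rshadow in_setD1 eqxx /= negbK => /reachesTP[t tT /connectP[p pz tp]].
move: tT; rewrite {t}tp; case: (shortenP pz) => -[|y q] /= zq uq _ qT.
  by apply/reachesTP; exists z.
case/andP: zq => zy yq; have zyq : z \notin y :: q by case/andP: uq.
have yM' : y \notin M'.
  case/and3P: zy => _ _; rewrite in_setD1 negb_and negbK.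
  by move: zyq; rewrite in_cons eq_sym negb_or => /andP[/negbTE->].
have yr : reachesT e T M' y.
  by apply/reachesTP; exists (last y q); rewrite //; apply/connectP; exists q;
    rewrite // (path_del_relD1 zyq).
apply: reachesT_connect (exchange_reachesT yM' yr); apply: connect1.
by case/and3P: zy => ezy _ _; rewrite /del_rel /= ezy zM (exchange_notin yM' yr).
Qed.

Hypotheses (Mmin : forall S, solution e Vinf T S -> #|M| <= #|S|)
  (Mshadows : forall S, solution e Vinf T S -> #|S| = #|M| ->
     #|rshadow e T S :|: fshadow e T S :|: S|
       <= #|rshadow e T M :|: fshadow e T M :|: M|)
  (Mrshadow : forall S, solution e Vinf T S -> #|S| = #|M| ->
     #|rshadow e T S :|: fshadow e T S :|: S|
       = #|rshadow e T M :|: fshadow e T M :|: M| ->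
     #|rshadow e T S| <= #|rshadow e T M|)
  (cardS' : #|S'| <= #|S0|).

Lemma exchange_boundary_eq : S' = S0.
Proof.
have M'sol := exchange_solution; have S0M := boundary_sub e M [set v].
have cardM' : #|M'| = #|M|.
  have := Mmin M'sol; have := subset_leq_card S0M; have := cardS'.
  have := (leq_card_setU (M :\: S0) S').1; rewrite cardsDS // /M' /S0; lia.
have thinM' : thin e T M'.
  by apply: min_solution_thin M'sol _ => S; rewrite cardM'; apply: Mmin.
have S'r := exchange_thin_disjoint thinM'.
have eq_shadows : #|rshadow e T M' :|: fshadow e T M' :|: M'|
                  = #|rshadow e T M :|: fshadow e T M :|: M|.
  apply/anti_leq; rewrite Mshadows // !shadows_setUC subset_leq_card //.
  by rewrite setCS exchange_Tpath_nodes.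
have rsub : rshadow e T M \subset rshadow e T M'.
  apply/subsetP => y yr; apply: exchange_rshadow; last first.
    by move: yr; rewrite in_rshadow => /andP[_ ->]; rewrite orbT.
  by rewrite in_setU in_setD (negbTE (rshadow_notin yr)) (disjointFl S'r yr)
    andbF.
have req : rshadow e T M' = rshadow e T M.
  by apply/esym/eqP; rewrite eqEcard rsub Mrshadow.
have S0S' : S0 \subset S'.
  apply/subsetP => y yS0; apply: contraT => yS'; have yM := subsetP S0M y yS0.
  have : y \in rshadow e T M'.
    by apply: exchange_rshadow; rewrite ?yM // in_setU in_setD yS0 (negbTE yS').
  by rewrite req => /rshadow_notin; rewrite yM.
by apply/esym/eqP; rewrite eqEcard S0S' cardS'.
Qed.

End Exchange.

Theorem corollary2p10 (V : finType) (e : rel V) (Vinf T : {set V}) (k : nat)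
  (Mstar : {set V}) :
  is_dag e -> T \subset Vinf -> 0 < k ->
  solution e Vinf T Mstar ->
  (forall S, solution e Vinf T S -> #|Mstar| <= #|S|) ->
  (forall S, solution e Vinf T S -> #|S| = #|Mstar| ->
     #|rshadow e T S :|: fshadow e T S :|: S|
       <= #|rshadow e T Mstar :|: fshadow e T Mstar :|: Mstar|) ->
  (forall S, solution e Vinf T S -> #|S| = #|Mstar| ->
     #|rshadow e T S :|: fshadow e T S :|: S|
       = #|rshadow e T Mstar :|: fshadow e T Mstar :|: Mstar| ->
     #|rshadow e T S| <= #|rshadow e T Mstar|) ->
  thin e T Mstar /\
  (forall v, v \in rshadow e T Mstar ->
     exists S, important_separator e Vinf [set v] T S /\ S \subset Mstar).
Proof.
move=> _ _ _ Msol Mmin Mshadows Mrshadow.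
split=> [|v vr]; first exact: min_solution_thin Msol Mmin.
have vM : [disjoint [set v] & Mstar] by rewrite disjoints1 (rshadow_notin vr).
have Msep := rshadow_separator (proj1 Msol) vr.
have [S impS /andP[cardS reachS]] :=
  exists_important_separator (separator_boundary vM Msep).
rewrite reachR_boundary // in reachS.
have [Ssep _ _] := impS.
exists S; split=> //.
by rewrite (exchange_boundary_eq Msol Ssep reachS Mmin Mshadows Mrshadow cardS)
  boundary_sub.
Qed.
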